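(* Let $\phi:\mathbb{R}\to\mathbb{R}\cup\{+\infty\}$ be a strictly convex, closed scalar function of Legendre type with Legendre conjugate $\psi(y)=\sup_\lambda(\lambda y-\phi(\lambda))$, and for vectors set $\phi(\mathbf{x})=\sum_m\phi(x_m)$, $\psi(\mathbf{y})=\sum_m\psi(y_m)$. Define $L_\phi(\mathbf{a},\mathbf{b})=\phi(\mathbf{a})+\psi(\mathbf{b})-\langle\mathbf{a},\mathbf{b}\rangle$ (equivalently $D_\phi(\mathbf{a},\nabla\psi(\mathbf{b}))$, the Bregman divergence of $\phi$), for vectors or scalars. Fix a user $i$ who has rated the set $\mathcal{V}_i$ of items, with ratings $R_{ij}\in[L]$ for $j\in\mathcal{V}_i$, and let $\hat{\mathbf{R}}_i=(\hat R_{ij})_{j\in\mathcal{V}_i}$ be any real vector of predictions. For $l\in[L]$ let $\Omega_{il}=|\{j\in\mathcal{V}_i: R_{ij}=l\}|$, assume $\Omega_{il}\ge 1$ for every $l$, and let $\bar{\hat R}_i^{\,l}=\frac{1}{\Omega_{il}}\sum_{j: R_{ij}=l}\hat R_{ij}$. For a rating-scale vector assign to each level $l$ a value $r_{il}$, and let $E_i\mathbf{r}_i\in\mathbb{R}^{|\mathcal{V}_i|}$ be the vector whose entry for item $j$ is $r_{i,R_{ij}}$. Then the set of minimizers of $L_\phi(E_i\mathbf{r}_i,\hat{\mathbf{R}}_i)$ over rating-scale vectors with $r_{i1}\le r_{i2}\le\cdots\le r_{iL}$ equals the set of minimizers of $\sum_{l=1}^L\Omega_{il}\,L_\phi\big(r_{il},\bar{\hat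 R}_i^{\,l}\big)$ over the same set of vectors.
   Context: In the paper the rating-scale vector lies in the set of vectors in $\mathbb{R}^L$ with components in non-increasing order, with rating level $l$ stored in component $L-l+1$ (one-hot encoding $e_{L-l+1}=1$ for rating $l$); in the statement above $r_{il}$ directly denotes the value assigned to rating level $l$, so this set corresponds to $r_{i1}\le\cdots\le r_{iL}$. *)

From HB Require Import structures.
From mathcomp Require Import all_boot all_order all_algebra.
From mathcomp Require Import all_classical all_reals all_analysis.
Set Implicit Arguments. Unset Strict Implicit. Unset Printing Implicit Defensive.
Import Order.TTheory GRing.Theory Num.Theory.
Import numFieldNormedType.Exports.
Local Open Scope classical_set_scope.
Local Open Scope ring_scope.

Section Legendre.
Variable R : realType.
Implicit Types (phi : R -> \bar R).

Definition edom phi : set R := [set x | (phi x < +oo)%E].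

Definition proper_fun phi : Prop :=
  (forall x, (-oo < phi x)%E) /\ (exists x, (phi x < +oo)%E).

Definition closed_fun phi : Prop :=
  forall a : R, closed [set x | (phi x <= a%:E)%E].

(* strictly convex (this also forces convexity of the effective domain) *)
Definition strictly_convex_fun phi : Prop :=
  forall x y t : R, x \in edom phi -> y \in edom phi -> x != y -> 0 < t < 1 ->
    (phi (t * x + (1 - t) * y)%R < t%:E * phi x + (1 - t)%R%:E * phi y)%E.

Definition convex_fun phi : Prop :=
  forall x y t : R, 0 <= t <= 1 ->
    (phi (t * x + (1 - t) * y)%R <= t%:E * phi x + (1 - t)%R%:E * phi y)%E.

(* essentially smooth (Rockafellar, Sec. 26), for a function on R:
   int dom phi nonempty, phi differentiable there, and |phi'(x_k)| -> +oo
   whenever x_k in int dom phi converges to a boundary point of dom phi. *)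
Definition essentially_smooth phi : Prop :=
  (exists x, (edom phi)° x) /\
  (forall x, (edom phi)° x -> derivable (fun z => fine (phi z)) x 1) /\
  (forall (b : R) (u : nat -> R),
     closure (edom phi) b -> ~ (edom phi)° b ->
     (forall k, (edom phi)° (u k)) -> u @ \oo --> b ->
     forall M : R, exists N : nat, forall k, (N <= k)%N ->
       M < `| derive1 (fun z => fine (phi z)) (u k) |).

(* essentially strictly convex; in dimension one, for an essentially smooth
   function this amounts to strict convexity on int dom phi *)
Definition essentially_strictly_convex phi : Prop :=
  forall x y t : R, (edom phi)° x -> (edom phi)° y -> x != y -> 0 < t < 1 ->
    (phi (t * x + (1 - t) * y)%R < t%:E * phi x + (1 - t)%R%:E * phi y)%E.

Definition legendre phi : Prop :=
  proper_fun phi /\ closed_fun phi /\ convex_fun phi /\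
  essentially_smooth phi /\ essentially_strictly_convex phi.

Definition conj_fun phi (y : R) : \bar R :=
  ereal_sup (range (fun l : R => ((l * y)%R%:E - phi l)%E)).

Definition Lphi phi (a b : R) : \bar R :=
  (phi a + conj_fun phi b - (a * b)%R%:E)%E.

Definition Lphi_vec phi (n : nat) (a b : 'I_n -> R) : \bar R :=
  ((\sum_(j < n) phi (a j)) + (\sum_(j < n) conj_fun phi (b j))
    - (\sum_(j < n) a j * b j)%R%:E)%E.

End Legendre.

Definition Omega_l (n L : nat) (Rt : 'I_n -> 'I_L) (l : 'I_L) : nat :=
  #|[set j | Rt j == l]|.

Definition avg_pred (R : realType) (n L : nat) (Rt : 'I_n -> 'I_L)
  (Rhat : 'I_n -> R) (l : 'I_L) : R :=
  (Omega_l Rt l)%:R^-1 * \sum_(j < n | Rt j == l) Rhat j.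

Definition Eexpand (R : realType) (n L : nat) (Rt : 'I_n -> 'I_L)
  (r : 'I_L -> R) : 'I_n -> R := fun j => r (Rt j).

Definition scale_vec (R : realType) (L : nat) (r : 'I_L -> R) : Prop :=
  forall l l' : 'I_L, (l <= l')%N -> r l <= r l'.

Definition argmin_set (T : Type) (R : realType) (S : set T) (f : T -> \bar R)
  : set T :=
  [set x | S x /\ forall y, S y -> (f x <= f y)%E].

From HB Require Import structures.
From mathcomp Require Import all_boot all_order all_algebra.
From mathcomp Require Import all_classical all_reals all_analysis.
From mathcomp Require Import ring.
Set Implicit Arguments.
Unset Strict Implicit.
Unset Printing Implicit Defensive.

Import Order.TTheory GRing.Theory Num.Theory.
Local Open Scope classical_set_scope.
Local Open Scope ring_scope.

(* Grouping the items by rating level, the phi-part and the inner product of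
   L_phi(E r, Rhat) regroup exactly into those of sum_l Omega_l L_phi(r_l, avg_l),
   because <E r, Rhat> = sum_l Omega_l r_l avg_l.  The two objectives thus differ
   by the constant sum_j psi(Rhat_j) - sum_l Omega_l psi(avg_l), independent of r,
   and have the same minimizers.  That constant is finite: psi(Rhat_j) < +oo by
   hypothesis, and psi, a supremum of affine functions, is bounded at a mean by a
   bound of its values; psi > -oo as phi is proper.  Nothing else about phi is
   used. *)

Lemma argmin_set_shift (T : Type) (R : realType) (S : set T)
    (f g : T -> \bar R) (c : R) :
  (forall x, f x = (g x + c%:E)%E) -> argmin_set S f = argmin_set S g.
Proof.
move=> fg; apply/seteqP; split=> x [Sx xmin]; split=> // y Sy.
  by have := xmin y Sy; rewrite !fg leeD2rE.
by rewrite !fg leeD2rE //; exact: xmin.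
Qed.

Section Conjugate.
Variables (R : realType) (phi : R -> \bar R).

Lemma Lphi_fin a b : conj_fun phi b \is a fin_num ->
  Lphi phi a b = (phi a + (fine (conj_fun phi b) - a * b)%:E)%E.
Proof. by move=> psib; rewrite /Lphi -(fineK psib) -addeA -EFinB. Qed.

Hypothesis phi_proper : proper_fun phi.

Lemma conj_fun_gtNy y : (-oo < conj_fun phi y)%E.
Proof.
have [phi_gtNy [x phix_lty]] := phi_proper.
have phix : phi x \is a fin_num by rewrite fin_numE -ltNye -ltey phi_gtNy.
apply: (@lt_le_trans _ _ ((x * y)%:E - phi x)%E).
  by rewrite -(fineK phix) -EFinB ltNyr.
by apply: ereal_sup_ubound; exists x.
Qed.

Lemma conj_fun_fin_num y :
  (conj_fun phi y < +oo)%E -> conj_fun phi y \is a fin_num.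
Proof. by move=> psiy; rewrite fin_numE -ltNye -ltey conj_fun_gtNy. Qed.

Lemma conj_fun_mean_le (I : finType) (P : pred I) (y : I -> R) (M : R) :
  (0 < #|P|)%N -> (forall i, P i -> (conj_fun phi (y i) <= M%:E)%E) ->
  (conj_fun phi (#|P|%:R^-1 * \sum_(i | P i) y i) <= M%:E)%E.
Proof.
move=> P_gt0 psiy_le; apply: ge_ereal_sup => _ [lam _ <-].
case phi_lam: (phi lam) => [c| |]; last 2 first.
- by rewrite addeNy leNye.
- by have := phi_proper.1 lam; rewrite phi_lam.
have affine_le i : P i -> lam * y i - c <= M.
  move=> Pi; rewrite -lee_fin EFinB -phi_lam.
  by apply: le_trans (psiy_le i Pi); apply: ereal_sup_ubound; exists lam.
have P_neq0 : #|P|%:R != 0 :> R by rewrite pnatr_eq0 -lt0n.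
rewrite -EFinB lee_fin.
rewrite [leLHS](_ : _ = #|P|%:R^-1 * \sum_(i | P i) (lam * y i - c)); last first.
  by rewrite sumrB sumr_const -mulr_sumr; field.
rewrite ler_pdivrMl ?ltr0n // mulr_natl -sumr_const.
by apply: ler_sum => i /affine_le.
Qed.

End Conjugate.

Section RatingLevels.
Variables (n L : nat) (Rt : 'I_n -> 'I_L).

Lemma Omega_lE (l : 'I_L) : Omega_l Rt l = #|[pred j | Rt j == l]|.
Proof. by apply: eq_card => j; rewrite /in_mem /= /in_set asboolb. Qed.

Lemma sum_level_const (V : nmodType) (l : 'I_L) (x : V) :
  \sum_(j < n | Rt j == l) x = x *+ Omega_l Rt l.
Proof. by rewrite sumr_const Omega_lE. Qed.

Lemma big_level (V : nmodType) (F : 'I_L -> V) :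
  \sum_(j < n) F (Rt j) = \sum_(l < L) F l *+ Omega_l Rt l.
Proof.
rewrite (partition_big Rt predT) //; apply: eq_bigr => l _.
by rewrite -sum_level_const; apply: eq_bigr => j /eqP ->.
Qed.

Variables (R : realType) (Rhat : 'I_n -> R).

Lemma sum_level_avg (l : 'I_L) : (0 < Omega_l Rt l)%N ->
  \sum_(j < n | Rt j == l) Rhat j = avg_pred Rt Rhat l *+ Omega_l Rt l.
Proof.
move=> Omega_gt0; rewrite -mulr_natl /avg_pred mulrA divff ?mul1r //.
by rewrite pnatr_eq0 -lt0n.
Qed.

Lemma inner_Eexpand (r : 'I_L -> R) : (forall l, 0 < Omega_l Rt l)%N ->
  \sum_(j < n) Eexpand Rt r j * Rhat j =
  \sum_(l < L) (r l * avg_pred Rt Rhat l) *+ Omega_l Rt l.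
Proof.
move=> Omega_gt0; rewrite (partition_big Rt predT) //; apply: eq_bigr => l _.
rewrite (eq_bigr (fun j => r l * Rhat j)); last by move=> j /eqP <-.
by rewrite -mulr_sumr sum_level_avg // mulrnAr.
Qed.

End RatingLevels.

Lemma conj_fun_avg_pred_fin_num (R : realType) (phi : R -> \bar R) (n L : nat)
    (Rt : 'I_n -> 'I_L) (Rhat : 'I_n -> R) (l : 'I_L) :
  proper_fun phi -> (0 < Omega_l Rt l)%N ->
  (forall j, (conj_fun phi (Rhat j) < +oo)%E) ->
  conj_fun phi (avg_pred Rt Rhat l) \is a fin_num.
Proof.
move=> phi_proper Omega_gt0 psi_lty.
have psi_fin j := conj_fun_fin_num phi_proper (psi_lty j).
pose M := \sum_(j < n) `|fine (conj_fun phi (Rhat j))|.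
have psi_le_M j : (conj_fun phi (Rhat j) <= M%:E)%E.
  rewrite -(fineK (psi_fin j)) lee_fin (le_trans (ler_norm _)) //.
  by rewrite /M (bigD1 j) //= lerDl sumr_ge0.
apply: conj_fun_fin_num => //; apply: le_lt_trans (ltry M).
rewrite /avg_pred Omega_lE; apply: conj_fun_mean_le => //.
by rewrite -Omega_lE.
Qed.

Lemma Lphi_vec_Eexpand (R : realType) (phi : R -> \bar R) (n L : nat)
    (Rt : 'I_n -> 'I_L) (Rhat : 'I_n -> R) (r : 'I_L -> R) :
  let psi := conj_fun phi in
  (forall l, 0 < Omega_l Rt l)%N ->
  (forall j, psi (Rhat j) \is a fin_num) ->
  (forall l, psi (avg_pred Rt Rhat l) \is a fin_num) ->
  Lphi_vec phi (Eexpand Rt r) Rhat =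
    (\sum_(l < L) (Omega_l Rt l)%:R%:E * Lphi phi (r l) (avg_pred Rt Rhat l)
     + (\sum_(j < n) fine (psi (Rhat j))
        - \sum_(l < L) fine (psi (avg_pred Rt Rhat l)) *+ Omega_l Rt l)%:E)%E.
Proof.
move=> psi Omega_gt0 psi_Rhat psi_avg.
have sum_phi : (\sum_(j < n) phi (Eexpand Rt r j) =
                \sum_(l < L) (Omega_l Rt l)%:R%:E * phi (r l))%E.
  rewrite (@big_level n L Rt _ (fun l => phi (r l))).
  by apply: eq_bigr => l _; rewrite mule_natl.
have sum_psi : (\sum_(j < n) psi (Rhat j) =
                (\sum_(j < n) fine (psi (Rhat j)))%:E)%E.
  by rewrite -sumEFin; apply: eq_bigr => j _; rewrite fineK.
under [in RHS]eq_bigr => l _ do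
  rewrite Lphi_fin // muleDr ?fin_num_adde_defl // -EFinM mulr_natl.
rewrite /Lphi_vec sum_phi sum_psi inner_Eexpand // big_split /= sumEFin.
rewrite -!addeA -!EFinD; congr (_ + _%:E)%E.
rewrite [X in _ = X + _](eq_bigr _ (fun l _ => mulrnBl _ _ _)) sumrB; ring.
Qed.

Theorem lemma2 (R : realType) (phi : R -> \bar R) (n L : nat)
  (Rt : 'I_n -> 'I_L) (Rhat : 'I_n -> R) :
  strictly_convex_fun phi -> closed_fun phi -> legendre phi ->
  (forall l : 'I_L, (1 <= Omega_l Rt l)%N) ->
  (forall j : 'I_n, (conj_fun phi (Rhat j) < +oo)%E) ->
  argmin_set (@scale_vec R L)
    (fun r => Lphi_vec phi (Eexpand Rt r) Rhat)
  = argmin_set (@scale_vec R L)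
    (fun r => (\sum_(l < L) (Omega_l Rt l)%:R%:E
                 * Lphi phi (r l) (avg_pred Rt Rhat l))%E).
Proof.
move=> _ _ [phi_proper _] Omega_gt0 psi_lty.
have psi_Rhat j := conj_fun_fin_num phi_proper (psi_lty j).
have psi_avg l := conj_fun_avg_pred_fin_num phi_proper (Omega_gt0 l) psi_lty.
by apply: argmin_set_shift => r; exact: Lphi_vec_Eexpand.
Qed.
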